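(* There exists a directed set $\mathcal A$, which is not a cardinal number, with $\operatorname{card}(\mathcal A)=\operatorname{cov}(\mathcal N)$, such that $\mathcal{ND}_{\mathcal A}$ is strongly $\mathfrak c$-algebrable in $\left(\mathbb R^{[0,1]}\right)^{\mathcal A}$.
   Context: A directed set is a nonempty set $\mathcal A$ with a reflexive transitive relation $\le$ in which any two elements have an upper bound; $x_A\to x$ if for each neighbourhood $U$ of $x$ there is $A_0$ with $x_A\in U$ for $A\ge A_0$. $\left(\mathbb R^{[0,1]}\right)^{\mathcal A}$ is the commutative real algebra of nets of functions $[0,1]\to\mathbb R$ with indexwise operations. $\lambda$ is Lebesgue measure, $\mathcal N$ the null subsets of $[0,1]$, $\operatorname{cov}(\mathcal N)$ the least size of a subfamily of $\mathcal N$ covering $[0,1]$. $\mathcal{ND}_{\mathcal A}$: nets of Lebesgue measurable $f_A:[0,1]\to\mathbb R$ such that there is an integrable $g$ with $|f_A|\le g$ a.e. for all $A$, $f_A\to f$ a.e. for some integrable $f$, and $\int|f_A-f|\,d\lambda$ does not converge to $0$. A subset $S$ of a commutative algebra is strongly $\kappa$-algebrable if there is a set $X$ of $\kappa$ algebraically independent elements such that every nonzero element of the (non-unital) algebra generated by $X$ belongs to $S$. *)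

From HB Require Import structures.
From mathcomp Require Import all_boot all_order all_algebra.
From mathcomp Require Import mpoly.
From mathcomp Require Import all_classical all_reals all_analysis.
Set Implicit Arguments. Unset Strict Implicit. Unset Printing Implicit Defensive.
Import Order.TTheory GRing.Theory Num.Theory.
Import numFieldNormedType.Exports.
Local Open Scope classical_set_scope.
Local Open Scope ring_scope.

Definition directed_set (A : Type) (le : A -> A -> Prop) : Prop :=
  [/\ (exists a : A, True),
      (forall a, le a a),
      (forall a b c, le a b -> le b c -> le a c) &
      (forall a b, exists c, le a c /\ le b c)].

(* (A, le) is (order-isomorphic to) a cardinal number with its natural order,
   i.e. an initial ordinal: a well-order all of whose proper initial segments
   have strictly smaller cardinality than A. *)
Definition is_cardinal_order (A : Type) (le : A -> A -> Prop) : Prop :=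
  (forall a, le a a) /\ (forall a b, le a b -> le b a -> a = b) /\
  [/\
      (forall a b c, le a b -> le b c -> le a c),
      (forall a b, le a b \/ le b a),
      (forall S : set A, S !=set0 -> exists2 m, S m & forall s, S s -> le m s) &
      (forall a : A, ~ ([set: A] #<= [set b | le b a /\ b <> a])%card)].

Definition net_cvg (A : Type) (le : A -> A -> Prop) (T : topologicalType)
  (u : A -> T) (l : T) : Prop :=
  forall U, nbhs l U -> exists a0, forall a, le a0 a -> U (u a).

Definition I01 (R : realType) : set R := `[0, 1]%classic.
Arguments I01 R : clear implicits.

Definition null01 (R : realType) (N : set R) : Prop :=
  N `<=` I01 R /\ (@lebesgue_measure R).-negligible N.

Definition null_cover (R : realType) (F : set (set R)) : Prop :=
  (forall N, F N -> null01 N) /\ I01 R `<=` \bigcup_(N in F) N.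

(* card(A) = cov(N): the least size of a family of null subsets of [0,1]
   covering [0,1] is attained and equals card(A). *)
Definition card_is_covN (R : realType) (A : Type) : Prop :=
  (exists F : set (set R), null_cover F /\ ([set: A] #= F)%card) /\
  (forall F : set (set R), null_cover F -> ([set: A] #<= F)%card).

(* ---------- the algebra (R^[0,1])^A ----------
   A function [0,1] -> R is represented by its extension by zero R -> R;
   thus R^[0,1] is identified with the (pointwise) algebra of functions
   R -> R vanishing outside [0,1], and nets are A -> (R -> R). *)
Definition net_elt (R : realType) (A : Type) (f : A -> R -> R) : Prop :=
  forall a x, ~ I01 R x -> f a x = 0.

Definition ND (R : realType) (A : Type) (le : A -> A -> Prop)
  (f : A -> R -> R) : Prop :=
  net_elt f /\
  (forall a, measurable_fun (I01 R) (f a)) /\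
  (exists g : R -> R, (@lebesgue_measure R).-integrable (I01 R) (EFin \o g) /\
     forall a, {ae @lebesgue_measure R, forall x, I01 R x -> `|f a x| <= g x}) /\
  (exists F : R -> R, (@lebesgue_measure R).-integrable (I01 R) (EFin \o F) /\
     {ae @lebesgue_measure R, forall x, I01 R x ->
        net_cvg le (fun a => f a x) (F x)} /\
     ~ net_cvg le (fun a => (\int[@lebesgue_measure R]_(x in I01 R)
                               (`|f a x - F x|)%:E)%E) 0%E).

Definition net_eval (R : realType) (A : Type) (n : nat)
  (P : mpoly.mpoly n R) (x : 'I_n -> A -> R -> R) : A -> R -> R :=
  fun a t => mpoly.meval (fun i => x i a t) P.

(* non-unital polynomial: zero constant term *)
Definition no_const (R : realType) (n : nat) (P : mpoly.mpoly n R) : Prop :=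
  mpoly.mcoeff (@mpoly.mnm0 n) P = 0.

(* strong kappa-algebrability, with kappa = card(K) *)
Definition strongly_algebrable (R : realType) (A : Type) (K : Type)
  (S : (A -> R -> R) -> Prop) : Prop :=
  exists X : set (A -> R -> R),
    (forall f, X f -> net_elt f) /\
    (X #= [set: K])%card /\
    (forall (n : nat) (x : 'I_n -> A -> R -> R) (P : mpoly.mpoly n R),
       injective x -> (forall i, X (x i)) -> P != 0 -> no_const P ->
       net_eval P x <> (fun _ _ => 0)) /\
    (forall (n : nat) (x : 'I_n -> A -> R -> R) (P : mpoly.mpoly n R),
       injective x -> (forall i, X (x i)) -> no_const P ->
       net_eval P x <> (fun _ _ => 0) -> S (net_eval P x)).

(* Let F be a null cover of [0,1] of least cardinality and choose Borel null
   hulls of its members.  Index nets by pairs (s, c) of a finite list s of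
   members of F, preordered by inclusion, and a code c from a countable set;
   since F is infinite, |F × F| = |F| and there are |F| such indices, and the
   preorder is not antisymmetric.  A real x gives the net
   (s, c) ↦ 1_{[0,1] \ ∪ hulls(s)} · φ_c(x), where the codes φ_c (rational
   cuts followed by a Kronecker substitution) keep every nonzero polynomial
   nonzero on finitely many distinct reals.  A nonzero polynomial without
   constant term in these nets is again of the form 1_{[0,1] \ ∪ hulls(s)} · Q(c)
   with Q bounded and not identically 0: it tends to 0 at every point of [0,1],
   which lies in a member of F that is eventually removed, while its L¹ norm
   |Q(c)| does not tend to 0. *)

From HB Require Import structures.
From mathcomp Require Import all_boot all_order all_algebra.
From mathcomp Require Import mpoly.
From mathcomp Require Import all_classical all_reals all_analysis.
From Stdlib Require List.
Set Implicit Arguments. Unset Strict Implicit. Unset Printing Implicit Defensive.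
Local Open Scope classical_set_scope.

Definition injects_into T U (A : set T) (B : set U) :=
  exists f : T -> U, (forall a, A a -> B (f a)) /\
    (forall a b, A a -> A b -> f a = f b -> a = b).

Lemma injects_into_trans T U V (A : set T) (B : set U) (C : set V) :
  injects_into A B -> injects_into B C -> injects_into A C.
Proof.
move=> [f [fAB finj]] [g [gBC ginj]]; exists (g \o f); split=> [a Aa|a b Aa Ab].
  exact/gBC/fAB.
by move/ginj => /(_ (fAB _ Aa) (fAB _ Ab)); apply: finj.
Qed.

Lemma injects_into_card_le T U (A : set T) (B : set U) :
  injects_into A B -> (A #<= B)%card.
Proof.
move=> [f [fAB finj]].
have : $|{injfun A >-> B}|.
  apply/injfunPex; exists f => [a /fAB //|a b].
  by rewrite !inE => Aa Ab; apply: finj.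
by case=> g; apply: inj_card_le g.
Qed.

(* A maximal family of "threads" (functions picking one point in each member of
   C, pairwise distinct in every member) must exhaust some member X0; following
   the threads through X0 then injects X0 into every member. *)
Lemma injects_into_minimum T (C : set (set T)) (X1 : set T) : C X1 ->
  exists2 X0, C X0 & forall X, C X -> injects_into X0 X.
Proof.
move=> CX1; pose I := {X : set T | C X}.
pose threads (D : set (I -> T)) :=
  (forall d, D d -> forall i, sval i (d i)) /\
  (forall d d', D d -> D d' -> forall i, d i = d' i -> d = d').
have [M [threadsM maxM]] : exists M, threads M /\ forall B, M `<` B -> ~ threads B.
  apply: Zorn_bigcup => F Fthreads Ftot; split.
    by move=> d [D FD Dd] i; exact: (Fthreads D FD).1 d Dd i.
  move=> d d' [D FD Dd] [D' FD' D'd'] i eq.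
  have [DD'|D'D] := Ftot D D' FD FD'.
    exact: (Fthreads D' FD').2 _ _ (DD' d Dd) D'd' i eq.
  exact: (Fthreads D FD).2 _ _ Dd (D'D d' D'd') i eq.
have [i0 exhausted] : exists i0 : I, forall t, sval i0 t -> exists2 d, M d & d i0 = t.
  apply: contrapT => notexh.
  have fresh (i : I) : exists t, sval i t /\ forall d, M d -> d i <> t.
    apply: contrapT => nfresh; apply: notexh; exists i => t it.
    apply: contrapT => nd; apply: nfresh; exists t; split=> // d Md dit; apply: nd.
    by exists d.
  have [ds Hds] := choice fresh.
  apply: (maxM (M `|` [set ds])).
    split=> [d Md|/(_ ds (or_intror erefl)) Mds]; first by left.
    exact: (Hds (exist _ X1 CX1)).2 ds Mds erefl.
  split=> [d [Md|->] i|d d' [Md|->] [Md'|->] i eq //].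
  - exact: threadsM.1.
  - exact: (Hds i).1.
  - exact: threadsM.2 _ _ Md Md' i eq.
  - by case: ((Hds i).2 d Md eq).
  - by case: ((Hds i).2 d' Md' (esym eq)).
exists (sval i0); first exact: svalP i0.
move=> X CX; pose j : I := exist _ X CX.
pose follow t := match pselect (exists2 d, M d & d i0 = t) with
  | left h => s2val (cid2 h) j | right _ => t end.
exists follow; split=> [t Ht|t t' Ht Ht'].
  rewrite /follow; case: pselect => [h|/(_ (exhausted t Ht))//].
  exact: threadsM.1 _ (s2valP (cid2 h)) j.
rewrite /follow; case: pselect => [h|/(_ (exhausted t Ht))//].
case: pselect => [h'|/(_ (exhausted t' Ht'))//] eq.
have := threadsM.2 _ _ (s2valP (cid2 h)) (s2valP (cid2 h')) j eq.
by move=> ed; rewrite -(s2valP' (cid2 h)) -(s2valP' (cid2 h')) ed.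
Qed.

Lemma injects_into_total T (A B : set T) : injects_into A B \/ injects_into B A.
Proof.
have [X0 [->|->] minX0] := injects_into_minimum (C := [set A; B]) (or_introl erefl).
- by left; apply: minX0; right.
- by right; apply: minX0; left.
Qed.

Section Pairing.
Variables (T : Type) (e : nat -> T).
Hypothesis einj : injective e.

(* Partial pairing functions on subsets containing the copy [range e] of nat;
   that copy provides the tags used to extend them. *)
Record is_pairing (Y : set T) (f : T * T -> T) : Prop := IsPairing {
  pairing_range : range e `<=` Y;
  pairing_closed : forall u v, Y u -> Y v -> Y (f (u, v));
  pairing_inj : forall u v u' v', Y u -> Y v -> Y u' -> Y v' ->
    f (u, v) = f (u', v') -> u = u' /\ v = v' }.

Definition pairing := {p : set T * (T * T -> T) | is_pairing p.1 p.2}.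

Definition extends (p q : pairing) : bool :=
  `[< (sval p).1 `<=` (sval q).1 /\
      forall u v, (sval p).1 u -> (sval p).1 v -> (sval p).2 (u, v) = (sval q).2 (u, v) >].

Lemma extends_refl : forall p, extends p p.
Proof. by move=> p; apply/asboolP; split. Qed.

Lemma extends_trans : forall p q r, extends p q -> extends q r -> extends p r.
Proof.
move=> p q r /asboolP [pq fpq] /asboolP [qr fqr]; apply/asboolP; split=> [x /pq /qr //|u v pu pv].
by rewrite fpq // fqr //; apply: pq.
Qed.

Lemma nat_pairing : exists f, is_pairing (range e) f.
Proof.
pose inv u := if pselect (exists n, e n = u) is left h then sval (cid h) else 0%N.
have invK n : inv (e n) = n.
  rewrite /inv; case: pselect => [h|[]]; last by exists n.
  by apply: einj; rewrite (svalP (cid h)).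
exists (fun w => e (pickle (inv w.1, inv w.2))); split=> //.
move=> u v u' v' [a _ <-] [b _ <-] [c _ <-] [d _ <-].
by rewrite /= !invK => /einj /(pcan_inj pickleK) [-> ->].
Qed.

Lemma extends_chain_bounded (A : set pairing) :
  total_on A extends -> exists q, forall p, A p -> extends p q.
Proof.
move=> Atot.
have [[p0 Ap0]|A0] := pselect (A !=set0); last first.
  have [f0 f0P] := nat_pairing.
  by exists (exist _ (range e, f0) f0P) => p Ap; case: A0; exists p.
pose Y := \bigcup_(p in A) (sval p).1.
have both u v : Y u -> Y v -> exists2 p, A p & (sval p).1 u /\ (sval p).1 v.
  move=> [p Ap pu] [q Aq qv].
  have [/asboolP [pq _]|/asboolP [qp _]] := Atot p q Ap Aq.
  - by exists q => //; split => //; apply: pq.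
  - by exists p => //; split => //; apply: qp.
pose f (w : T * T) :=
  if pselect (exists2 p, A p & (sval p).1 w.1 /\ (sval p).1 w.2) is left h
  then (sval (s2val (cid2 h))).2 w else w.1.
have fE p u v : A p -> (sval p).1 u -> (sval p).1 v -> f (u, v) = (sval p).2 (u, v).
  move=> Ap pu pv; rewrite /f; case: pselect => [h|[]]; last by exists p.
  have [qu qv] := s2valP' (cid2 h); have Aq := s2valP (cid2 h).
  have [/asboolP [_ fpq]|/asboolP [_ fqp]] := Atot p _ Ap Aq; first by rewrite fpq.
  by rewrite fqp.
have fY : is_pairing Y f.
  split.
  - by move=> _ [n _ <-]; exists p0 => //; apply: pairing_range (svalP p0) _ _; exists n.
  - move=> u v Yu Yv; have [p Ap [pu pv]] := both u v Yu Yv.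
    by rewrite (fE p) //; exists p => //; exact: (pairing_closed (svalP p)).
  - move=> u v u' v' Yu Yv Yu' Yv'.
    have [p Ap [pu pv]] := both u v Yu Yv; have [q Aq [qu qv]] := both u' v' Yu' Yv'.
    rewrite (fE p) // (fE q) //.
    have [/asboolP [pq fpq]|/asboolP [qp fqp]] := Atot p q Ap Aq.
    + by rewrite fpq //; apply: (pairing_inj (svalP q)) => //; apply: pq.
    + by rewrite fqp //; apply: (pairing_inj (svalP p)) => //; apply: qp.
exists (exist _ (Y, f) fY) => p Ap; apply/asboolP; split=> [x px|u v pu pv] /=.
  by exists p.
by rewrite (fE p).
Qed.

Section Grow.
Variables (Y : set T) (f : T * T -> T) (g : T -> T).
Hypothesis fY : is_pairing Y f.
Hypothesis gY : forall y, Y y -> ~ Y (g y).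
Hypothesis ginj : forall y y', Y y -> Y y' -> g y = g y' -> y = y'.
Local Notation W := (Y `|` g @` Y).

Definition grow_back z :=
  if pselect (exists2 y, Y y & g y = z) is left h then s2val (cid2 h) else z.

Lemma grow_back_id z : Y z -> grow_back z = z.
Proof.
move=> Yz; rewrite /grow_back; case: pselect => // -[y Yy gyz].
by case: (gY Yy); rewrite gyz.
Qed.

Lemma grow_back_g y : Y y -> grow_back (g y) = y.
Proof.
move=> Yy; rewrite /grow_back; case: pselect => [h|[]]; last by exists y.
exact: ginj (s2valP (cid2 h)) Yy (s2valP' (cid2 h)).
Qed.

Lemma grow_back_in z : W z -> Y (grow_back z).
Proof. by case=> [Yz|[y Yy <-]]; [rewrite grow_back_id|rewrite grow_back_g]. Qed.

Lemma grow_back_inj a b : W a -> W b ->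
  `[< Y a >] = `[< Y b >] -> grow_back a = grow_back b -> a = b.
Proof.
case=> [Ya|[y Yy <-]] [Yb|[y' Yy' <-]].
- by rewrite !grow_back_id.
- by rewrite (asboolT Ya) (asboolF (gY Yy')).
- by rewrite (asboolT Yb) (asboolF (gY Yy)).
- by rewrite !grow_back_g // => _ ->.
Qed.

Definition grow_tag (b1 b2 : bool) := e (b1 + 2 * b2)%N.

Lemma grow_tag_in b1 b2 : Y (grow_tag b1 b2).
Proof. by apply: (pairing_range fY); exists (b1 + 2 * b2)%N. Qed.

Lemma grow_tag_inj b1 b2 b1' b2' :
  grow_tag b1 b2 = grow_tag b1' b2' -> b1 = b1' /\ b2 = b2'.
Proof. by move=> /einj; case: b1; case: b2; case: b1'; case: b2'. Qed.

Definition grow_code u v :=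
  f (f (grow_back u, grow_back v), grow_tag `[< Y u >] `[< Y v >]).

Lemma grow_code_in u v : W u -> W v -> Y (grow_code u v).
Proof.
move=> Wu Wv; have Yb := pairing_closed fY (grow_back_in Wu) (grow_back_in Wv).
exact (pairing_closed fY Yb (grow_tag_in _ _)).
Qed.

Lemma grow_code_inj u v u' v' : W u -> W v -> W u' -> W v' ->
  grow_code u v = grow_code u' v' -> u = u' /\ v = v'.
Proof.
move=> Wu Wv Wu' Wv'; have Yb := pairing_closed fY (grow_back_in Wu) (grow_back_in Wv).
have Yb' := pairing_closed fY (grow_back_in Wu') (grow_back_in Wv').
move=> /(pairing_inj fY Yb (grow_tag_in _ _) Yb' (grow_tag_in _ _)) [].
move=> /(pairing_inj fY (grow_back_in Wu) (grow_back_in Wv) (grow_back_in Wu')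
  (grow_back_in Wv')) [bu bv] /grow_tag_inj [tu tv].
by split; apply: grow_back_inj.
Qed.

(* Pairs outside Y × Y are coded in Y, with a tag recording which coordinates
   came from g(Y), and the code is moved into g(Y) by g. *)
Definition grow_pairing (w : T * T) :=
  if pselect (Y w.1 /\ Y w.2) then f w else g (grow_code w.1 w.2).

Lemma grow_pairing_id u v : Y u -> Y v -> grow_pairing (u, v) = f (u, v).
Proof. by move=> Yu Yv; rewrite /grow_pairing; case: pselect => // -[]. Qed.

Lemma is_pairing_grow : is_pairing W grow_pairing.
Proof.
split=> [x ex|u v Wu Wv|u v u' v' Wu Wv Wu' Wv']; first by left; apply: pairing_range fY _ ex.
  rewrite /grow_pairing; case: pselect => /= [[Yu Yv]|_].
    by left; exact (pairing_closed fY Yu Yv).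
  by right; exists (grow_code u v) => //; apply: grow_code_in.
rewrite /grow_pairing; case: pselect => [[Yu Yv]|nY]; case: pselect => [[Yu' Yv']|nY'] /=.
- exact (pairing_inj fY Yu Yv Yu' Yv').
- by move=> E; case: (gY (grow_code_in Wu' Wv')); rewrite -E; exact (pairing_closed fY Yu Yv).
- by move=> E; case: (gY (grow_code_in Wu Wv)); rewrite E; exact (pairing_closed fY Yu' Yv').
- by move=> /(ginj (grow_code_in Wu Wv) (grow_code_in Wu' Wv')); apply: grow_code_inj.
Qed.
End Grow.

Lemma pairing_square_injection Y f : is_pairing Y f -> injects_into (~` Y) Y ->
  exists p : T * T -> T, injective p.
Proof.
move=> fY [h [hY hinj]].
have Ye n : Y (e n) by apply: (pairing_range fY); exists n.
pose k t := if pselect (Y t) then f (t, e 0) else f (h t, e 1).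
have k_inj : injective k.
  move=> a b; rewrite /k; case: pselect => Ya; case: pselect => Yb.
  - by move=> /(pairing_inj fY) [].
  - by move=> /(pairing_inj fY) [] // => [|_ /einj //]; exact: hY.
  - by move=> /(pairing_inj fY) [] // => [|_ /einj //]; exact: hY.
  - by move=> /(pairing_inj fY) [] // => [||/hinj -> //]; exact: hY.
have Yk t : Y (k t).
  rewrite /k; case: pselect => Yt; first exact (pairing_closed fY Yt (Ye 0)).
  exact (pairing_closed fY (hY _ Yt) (Ye 1)).
exists (fun w => f (k w.1, k w.2)) => -[a b] [c d] /= /(pairing_inj fY) [] //.
by move=> /k_inj -> /k_inj ->.
Qed.

(* A premaximal pairing cannot grow, so its set is at least as large as its complement. *)
Lemma square_injection : exists p : T * T -> T, injective p.
Proof.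
have [f0 f0P] := nat_pairing.
have [[[Y f] fY] maxY] := ZL_preorder (exist _ (range e, f0) f0P) extends_refl
  extends_trans extends_chain_bounded.
have [[g [gY ginj]]|] := injects_into_total Y (~` Y); last exact: pairing_square_injection fY.
pose grown : pairing := exist _ (Y `|` g @` Y, grow_pairing Y f g) (is_pairing_grow fY gY ginj).
have /maxY/asboolP [/= grow _] : extends (exist _ (Y, f) fY) grown.
  by apply/asboolP; split=> [x Yx|u v Yu Yv] /=; [left|rewrite grow_pairing_id].
have Ye0 : Y (e 0) by apply: (pairing_range fY); exists 0%N.
by case: (gY _ Ye0); apply: grow; right; exists (e 0).
Qed.

Lemma seq_injection : exists enc : seq T -> T, injective enc.
Proof.
have [p p_inj] := square_injection.
pose encl := fix encl s := if s is x :: s' then p (x, encl s') else e 0.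
exists (fun s => p (e (size s), encl s)) => s s' /p_inj [/einj].
by elim: s s' => [|x s IH] [|x' s'] //= [/IH sz] /p_inj [-> /sz ->].
Qed.
End Pairing.

Import Order.TTheory GRing.Theory Num.Theory.
Local Open Scope ring_scope.

Lemma base_expansion_inj n (D : nat) (m m' : 'I_n -> nat) :
  (forall i, (m i < D)%N) -> (forall i, (m' i < D)%N) ->
  (\sum_(i < n) m i * D ^ i = \sum_(i < n) m' i * D ^ i)%N -> m =1 m'.
Proof.
elim: n m m' => [|n IH] m m' mD m'D; first by move=> _ [].
rewrite !big_ord_recl /= !expn0 !muln1.
have shift (k : 'I_n.+1 -> nat) : (\sum_(i < n) k (lift ord0 i) * D ^ bump 0 i)%N =
    (D * \sum_(i < n) k (lift ord0 i) * D ^ i)%N.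
  rewrite big_distrr /=; apply: eq_bigr => i _.
  by rewrite /bump /= add1n expnS mulnCA.
rewrite !shift => E.
have D0 : (0 < D)%N by apply: leq_ltn_trans (mD ord0).
have m0 : m ord0 = m' ord0.
  have := congr1 (modn^~ D) E => /=.
  by rewrite ![(_ + D * _)%N]addnC !(mulnC D) !modnMDl !modn_small.
move: E; rewrite m0 => /addnI /eqP; rewrite eqn_pmul2l // => /eqP E.
have := IH (m \o lift ord0) (m' \o lift ord0) (fun i => mD _) (fun i => m'D _) E.
by move=> mm' i; case: (unliftP ord0 i) => [j ->|->] //; apply: mm'.
Qed.

Lemma mnm_le_mdeg n (m : 'X_{1..n}) i : (m i <= mdeg m)%N.
Proof. by rewrite mdegE (bigD1 i) //= leq_addr. Qed.

Lemma sub_count_lt (T : eqType) (a b : pred T) (s : seq T) x :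
  subpred a b -> x \in s -> b x -> ~~ a x -> (count a s < count b s)%N.
Proof.
move=> ab; elim: s => //= y s IH; rewrite inE => /orP[/eqP <-|xs] bx nax.
  by rewrite (negbTE nax) bx add0n add1n ltnS sub_count.
rewrite -addnS; apply: leq_add (IH xs bx nax).
by case: (boolP (a y)) => // /ab ->.
Qed.

(* Kronecker substitution X_i := y ^+ (D ^ i), with D = msize P, maps distinct
   monomials of P to distinct powers of y, so P becomes a nonzero univariate
   polynomial, which cannot vanish at all the points 1/(k+2). *)
Lemma kronecker_substitution_neq0 (R : numFieldType) n (P : {mpoly R[n]}) :
  P != 0 ->
  exists k : nat, meval (fun i => (k.+2%:R^-1 : R) ^+ (msize P ^ i)) P != 0.
Proof.
move=> P0; set D := msize P.
pose E (m : 'X_{1..n}) := (\sum_(i < n) m i * D ^ i)%N.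
have suppD m i : m \in msupp P -> (m i < D)%N.
  by move=> ms; apply: leq_ltn_trans (mnm_le_mdeg m i) (msize_mdeg_lt ms).
have E_inj m m' : m \in msupp P -> m' \in msupp P -> E m = E m' -> m = m'.
  move=> ms ms' eE; apply/mnmP => i.
  exact: base_expansion_inj (suppD m ^~ ms) (suppD m' ^~ ms') eE i.
pose Q : {poly R} := \sum_(m <- msupp P) P@_m *: 'X^(E m).
have evQ y : meval (fun i => y ^+ (D ^ i)) P = Q.[y].
  rewrite mevalE /Q horner_sum; apply: eq_bigr => m _.
  rewrite hornerZ hornerXn; congr (_ * _).
  by rewrite /E -prodrXr; apply: eq_bigr => i _; rewrite -exprM mulnC.
have Q0 : Q != 0.
  have : msupp P != [::] by rewrite msupp_eq0.
  case Es: (msupp P) => [|m0 s] // _.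
  have m0s : m0 \in msupp P by rewrite Es inE eqxx.
  apply/eqP => /(congr1 (fun p : {poly R} => p`_(E m0))).
  rewrite coef0 /Q coef_sum (bigD1_seq m0) //= ?msupp_uniq //.
  rewrite coefZ coefXn eqxx mulr1 big1_seq ?addr0.
    by apply/eqP; rewrite mcoeff_eq0 negbK.
  move=> m /andP[mm0 ms]; rewrite coefZ coefXn.
  case: eqP => [/esym/E_inj|]; last by rewrite mulr0.
  by move=> /(_ ms m0s) em; rewrite em eqxx in mm0.
pose pts := [seq (k.+2%:R^-1 : R) | k <- iota 0 (size Q)].
have pts_uniq : uniq pts.
  rewrite map_inj_uniq ?iota_uniq // => a b /invr_inj /eqP.
  by rewrite eqr_nat => /eqP [].
have : ~~ all (root Q) pts.
  apply/negP => allr; have := max_poly_roots Q0 allr pts_uniq.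
  by rewrite size_map size_iota ltnn.
by case/allPn => y /mapP [k _ ->] nr; exists k; rewrite evQ.
Qed.

Lemma meval_zero (R : comRingType) n (P : {mpoly R[n]}) : meval (fun _ => 0) P = P@_0%MM.
Proof.
rewrite mevalE (eq_bigr (fun m => P@_m * (m == 0%MM)%:R)); last first.
  move=> m _; congr (_ * _); case: eqP => [->|/eqP m0].
    by apply: big1 => i _; rewrite mnm0E expr0.
  have [i mi] : exists i, m i != 0%N.
    apply/existsP; apply: contraNT m0 => /existsPn H.
    by apply/eqP/mnmP => i; rewrite mnm0E; apply/eqP; rewrite -[_ == _]negbK H.
  by rewrite (bigD1 i) //= expr0n (negbTE mi) mul0r.
have [m0s|m0s] := boolP (0%MM \in msupp P).
  rewrite (bigD1_seq 0%MM) ?msupp_uniq //= eqxx mulr1 big1 ?addr0 //.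
  by move=> m /negbTE ->; rewrite mulr0.
rewrite big1_seq => [|m /andP[_ ms]]; first by apply/esym/eqP; rewrite mcoeff_eq0.
by case: eqP ms => [->|_]; [rewrite (negbTE m0s)|rewrite mulr0].
Qed.

Lemma meval_scale_bool (R : comRingType) n (P : {mpoly R[n]}) (b : bool) (v : 'I_n -> R) :
  P@_0%MM = 0 -> meval (fun i => b%:R * v i) P = b%:R * meval v P.
Proof.
case: b => P0; first by rewrite mul1r; apply: meval_eq => i; rewrite mul1r.
by rewrite mul0r -P0 -meval_zero; apply: meval_eq => i; rewrite mul0r.
Qed.

Lemma normr_meval_le (R : numDomainType) n (P : {mpoly R[n]}) (v : 'I_n -> R) :
  (forall i, `|v i| <= 1) -> `|meval v P| <= \sum_(m <- msupp P) `|P@_m|.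
Proof.
move=> v1; rewrite mevalE; apply: le_trans (ler_norm_sum _ _ _) _.
apply: ler_sum => m _; rewrite normrM ler_piMr //.
rewrite normr_prod; apply: prodr_ile1 => i _; rewrite normr_ge0 /=.
by rewrite normrX exprn_ile1.
Qed.

Definition code := (seq rat * seq nat * nat)%type.

Definition code0 : code := ([::], [::], 0%N).

Section RationalCuts.
Variable R : realType.

Definition cuts_below (q : seq rat) (x : R) : nat := count (fun z : rat => ratr z < x) q.

(* Put a rational between every pair r i < r i'. *)
Lemma rational_cuts_separate n (r : 'I_n -> R) : injective r ->
  exists q : seq rat, injective (fun i => cuts_below q (r i)).
Proof.
move=> rinj.
have mid i i' : r i < r i' -> exists q : rat, r i < ratr q < r i'.
  by move=> /rat_in_itvoo [q]; rewrite in_itv /=; exists q.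
pose md i i' := if pselect (r i < r i') is left h then sval (cid (mid i i' h)) else 0%R.
have mdP i i' : r i < r i' -> r i < ratr (md i i') < r i'.
  by move=> h; rewrite /md; case: pselect => [h'|//]; exact: svalP (cid (mid i i' h')).
set q := [seq md i i' | i <- enum 'I_n, i' <- enum 'I_n]; exists q.
have cuts_lt i i' : r i < r i' -> (cuts_below q (r i) < cuts_below q (r i'))%N.
  move=> h; have /andP[h1 h2] := mdP i i' h.
  apply: (@sub_count_lt _ _ _ _ (md i i')).
  - by move=> z /= zl; apply: lt_trans zl h.
  - by apply/allpairsP; exists (i, i'); rewrite !mem_enum.
  - by [].
  - by rewrite -leNgt ltW.
move=> i i' /= E; apply: rinj; case: (ltgtP (r i) (r i')) => // h.
- by have := cuts_lt _ _ h; rewrite E ltnn.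
- by have := cuts_lt _ _ h; rewrite E ltnn.
Qed.

Definition code_eval (c : code) (x : R) : R :=
  c.2.+2%:R^-1 ^+ nth 0%N c.1.2 (cuts_below c.1.1 x).

Lemma code_eval_ge0 c x : 0 <= code_eval c x.
Proof. by rewrite exprn_ge0 // invr_ge0 ler0n. Qed.

Lemma code_eval_le1 c x : code_eval c x <= 1.
Proof. by rewrite exprn_ile1 ?invr_ge0 ?ler0n // invf_le1 ?ltr0n // ler1n. Qed.

Lemma code_separates n (r : 'I_n -> R) (P : {mpoly R[n]}) :
  injective r -> P != 0 ->
  exists c, meval (fun i => code_eval c (r i)) P != 0.
Proof.
(* The code sends r i to (k+2)^-(msize P ^ i): Kronecker's substitution. *)
move=> rinj P0; have [q q_inj] := rational_cuts_separate rinj.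
have [k Pk] := kronecker_substitution_neq0 P0.
pose j i := cuts_below q (r i).
pose g := mkseq (fun p => \sum_(i < n | j i == p) msize P ^ i)%N (\sum_(i < n) (j i).+1).
exists (q, g, k); rewrite (meval_eq _ (v2 := fun i => (k.+2%:R^-1 : R) ^+ (msize P ^ i))) //.
move=> i; rewrite /code_eval /=; congr (_ ^+ _).
rewrite nth_mkseq; last by rewrite (bigD1 i) //= leq_addr.
rewrite (eq_bigl (fun i' => i' == i)) ?big_pred1_eq // => i' /=.
by apply/eqP/eqP => [/q_inj|->].
Qed.
End RationalCuts.

Lemma injective_range_factor (I A B : Type) (f : A -> B) (x : I -> B) :
  injective x -> (forall i, range f (x i)) -> exists2 r : I -> A, injective r & x = f \o r.
Proof.
move=> xinj xf; have /choice [r rE] : forall i, exists a, f a = x i.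
  by move=> i; have [a _ <-] := xf i; exists a.
exists r => [i j rij|]; last by apply: boolp.funext => i /=; rewrite rE.
by apply: xinj; rewrite -!rE rij.
Qed.

Section UnitInterval.
Variable R : realType.
Local Notation mu := (@lebesgue_measure R).

Lemma I01_measurable : measurable (I01 R).
Proof. exact: measurable_itv. Qed.

Lemma lebesgue_I01 : mu (I01 R) = 1%E.
Proof. by rewrite /I01 lebesgue_measure_itv /= lte_fin ltr01 oppr0 adde0. Qed.

Lemma I01_not_negligible : ~ mu.-negligible (I01 R).
Proof.
move=> /(negligibleP mu I01_measurable).1 I0.
by have := lebesgue_I01; rewrite I0 => /eqP; rewrite eq_sym onee_eq0.
Qed.

Lemma I01_0 : I01 R 0.
Proof. by rewrite /I01 /= in_itv /= lexx ler01. Qed.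

Lemma singletons_null_cover : null_cover [set [set x] | x in I01 R].
Proof.
split=> [_ [x Ix <-]|x Ix]; last by exists [set x] => //; exists x.
split=> [y -> //|]; apply/(negligibleP mu (measurable_set1 x)).
exact: lebesgue_measure_set1.
Qed.
End UnitInterval.

Section NullCover.
Variable R : realType.
Local Notation mu := (@lebesgue_measure R).
Variable F : set (set R).
Hypothesis Fcover : null_cover F.

Definition member := {N : set R | F N}.

Lemma member_inj : injective (@sval (set R) F).
Proof. by move=> [N FN] [N' FN'] /= NN'; apply: eq_exist. Qed.

Lemma member_fresh (s : seq member) : exists t : member, forall u, List.In u s -> u <> t.
Proof.
have s_negligible : mu.-negligible (fun x => exists2 u, List.In u s & sval u x).
  elim: s => [|u s IH].
    by apply: negligibleS (negligible_set0 mu) => x [].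
  apply: negligibleS (negligibleU (Fcover.1 _ (svalP u)).2 IH).
  by move=> x [v [<-|vs] vx]; [left|right; exists v].
have [x Ix sx] : exists2 x, I01 R x & ~ exists2 u, List.In u s & sval u x.
  apply: contrapT => H; apply: (@I01_not_negligible R); apply: negligibleS s_negligible.
  by move=> x Ix; apply: contrapT => nsx; apply: H; exists x.
have [N FN Nx] := Fcover.2 x Ix.
by exists (exist _ N FN) => u su ut; apply: sx; exists u; rewrite // ut.
Qed.

Lemma nat_injects_members : exists e : nat -> member, injective e.
Proof.
have [fresh freshP] := choice member_fresh.
pose prefix := fix prefix n := if n is n'.+1 then fresh (prefix n') :: prefix n' else [::].
have in_prefix m n : (m < n)%N -> List.In (fresh (prefix m)) (prefix n).
  elim: n => // n IH; rewrite ltnS leq_eqVlt => /orP[/eqP ->|/IH]; by [left|right].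
exists (fun n => fresh (prefix n)) => m n E; case: (ltngtP m n) => // mn.
- by case: (freshP (prefix n) _ (in_prefix _ _ mn)).
- by case: (freshP (prefix m) _ (in_prefix _ _ mn)).
Qed.
End NullCover.

Import numFieldNormedType.Exports.

Section Net.
Variable R : realType.
Local Notation mu := (@lebesgue_measure R).
Variable F : set (set R).
Hypothesis Fcover : null_cover F.
Variable hull : member F -> set R.
Hypothesis hullP :
  forall u, [/\ measurable (hull u), mu (hull u) = 0 & sval u `<=` hull u].

Definition index := (seq (member F) * code)%type.

Definition index_le (a b : index) := forall u, List.In u a.1 -> List.In u b.1.

Fixpoint covered (s : seq (member F)) : set R :=
  if s is u :: s' then hull u `|` covered s' else set0.

Definition uncovered s := I01 R `\` covered s.

Lemma covered_measurable s : measurable (covered s).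
Proof.
elim: s => [|u s IH] /=; first exact: measurable0.
by apply: measurableU IH; case: (hullP u).
Qed.

Lemma lebesgue_covered s : mu (covered s) = 0.
Proof.
apply/(negligibleP mu (covered_measurable s)).
elim: s => [|u s IH] /=; first exact: negligible_set0.
by apply: negligibleU IH; case: (hullP u) => ? ? _; apply/negligibleP.
Qed.

Lemma hull_sub_covered u s : List.In u s -> hull u `<=` covered s.
Proof. by elim: s => [//|v s IH] /= [->|/IH us] x hx; [left|right; apply: us]. Qed.

Lemma uncovered_measurable s : measurable (uncovered s).
Proof. exact: measurableD (@I01_measurable R) (covered_measurable s). Qed.

Lemma uncovered_sub s : uncovered s `<=` I01 R.
Proof. by move=> x []. Qed.

Lemma lebesgue_uncovered s : mu (uncovered s) = 1%E.
Proof.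
have I01_covered : mu (I01 R `&` covered s) = 0.
  apply: subset_measure0 (lebesgue_covered s) => //.
    exact: measurableI (@I01_measurable R) (covered_measurable s).
  exact: covered_measurable.
rewrite /uncovered measureD; first last.
- by rewrite [X in (X < _)%E](_ : _ = 1%E) ?ltry //; exact: lebesgue_I01.
- exact: covered_measurable.
- exact: I01_measurable.
rewrite [X in (X - _)%E](_ : _ = 1%E); last exact: lebesgue_I01.
by rewrite [X in (_ - X)%E](_ : _ = 0%E) ?sube0 //; exact: I01_covered.
Qed.

Lemma uncovered_nil : uncovered [::] = I01 R.
Proof. exact: setD0. Qed.

Lemma index_le_directed : directed_set index_le.
Proof.
split=> [|a u //|a b c ab bc u /ab /bc //|a b].
  by exists ([::], code0).
by exists (a.1 ++ b.1, a.2); split=> u ua; apply: List.in_or_app; [left|right].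
Qed.

(* A single member listed once or twice gives two distinct equivalent indices. *)
Lemma index_le_not_cardinal : ~ is_cardinal_order index_le.
Proof.
have [t _] := member_fresh Fcover [::].
move=> [_ [antisym _]].
have : ([:: t], code0) = ([:: t; t], code0).
  by apply: antisym => u; [case=> [->|[]]|case=> [->|[->|[]]]]; left.
by [].
Qed.

Definition uncovered_net (Q : code -> R) : index -> R -> R :=
  fun a t => \1_(uncovered a.1) t * Q a.2.

Lemma uncovered_net_elt Q : net_elt (uncovered_net Q).
Proof.
by move=> a x nIx; rewrite /uncovered_net indicE memNset ?mul0r // => /uncovered_sub.
Qed.

Lemma uncovered_net_measurable Q a : measurable_fun (I01 R) (uncovered_net Q a).
Proof.
apply: measurable_realfun.measurable_funM; last exact: measurable_cst.
exact: measurable_realfun.measurable_indic (uncovered_measurable _).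
Qed.

Lemma integrable_cst_I01 (B : R) : mu.-integrable (I01 R) (EFin \o cst B).
Proof.
apply/integrableP; split; first exact/measurable_realfun.measurable_EFinP/measurable_cst.
rewrite (_ : (fun x => _) = cst `|B|%:E) ?integral_cst //; last exact: I01_measurable.
rewrite [X in (_ * X)%E](_ : _ = 1%E) ?mule1 ?ltry //; exact: lebesgue_I01.
Qed.

Lemma integral_uncovered_net Q a :
  (\int[mu]_(x in I01 R) (`|uncovered_net Q a x - 0|)%:E)%E = `|Q a.2|%:E.
Proof.
rewrite (_ : (fun x => _) = (fun x => `|Q a.2|%:E * (\1_(uncovered a.1) x)%:E)%E).
  rewrite ge0_integralZl_EFin //; last 2 first.
  - exact: I01_measurable.
  - apply/(measurable_realfun.measurable_EFinP _ (\1_(uncovered a.1))).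
    exact: measurable_realfun.measurable_indic (uncovered_measurable _).
  rewrite integral_indic; [|exact: I01_measurable|exact: uncovered_measurable].
  rewrite setIidl; last exact: uncovered_sub.
  by rewrite [X in (_ * X)%E](_ : _ = 1%E) ?mule1 //; exact: lebesgue_uncovered.
apply: boolp.funext => x; rewrite /uncovered_net subr0 normrM indicE.
by case: (x \in uncovered a.1); rewrite ?normr1 ?normr0 ?mul1r ?mul0r ?mule1 ?mule0.
Qed.

Lemma uncovered_net_cvg0 Q t : I01 R t -> net_cvg index_le (uncovered_net Q ^~ t) 0.
Proof.
move=> It U U0; have [N FN Nt] := Fcover.2 t It.
exists ([:: exist _ N FN], code0) => -[s c] le_s /=.
have st : covered s t.
  apply: hull_sub_covered (le_s _ (or_introl erefl)) _ _.
  by case: (hullP (exist _ N FN)) => _ _; apply.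
by rewrite /uncovered_net indicE memNset ?mul0r => [|[]] //; exact: nbhs_singleton U0.
Qed.

Lemma uncovered_net_ND (Q : code -> R) (B : R) :
  (forall c, `|Q c| <= B) -> (exists c, Q c != 0) -> ND index_le (uncovered_net Q).
Proof.
move=> QB [c Qc]; split; first exact: uncovered_net_elt.
split; first exact: uncovered_net_measurable.
split.
  exists (cst B); split=> [|a]; first exact: integrable_cst_I01.
  have B0 : 0 <= B := le_trans (normr_ge0 _) (QB c).
  apply: aeW => x Ix; rewrite /uncovered_net normrM indicE /=.
  by case: (x \in _); rewrite ?normr1 ?normr0 ?mul1r ?mul0r.
exists (fun _ => 0); split; first exact: integrable0.
split=> [|L1cvg]; first by apply: aeW => t; apply: uncovered_net_cvg0.
have Qc_pos : 0 < `|Q c| by rewrite normr_gt0.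
have [a0 a0P] := L1cvg _ (@nbhs_open_ereal_lt R 0 (fun=> `|Q c|) Qc_pos).
by have := a0P (a0.1, c) (fun u h => h); rewrite /= integral_uncovered_net ltxx.
Qed.

Lemma uncovered_net_nil Q c : uncovered_net Q ([::], c) 0 = Q c.
Proof. by rewrite /uncovered_net uncovered_nil indicE mem_set ?mul1r //; exact: I01_0. Qed.

Definition generator (x : R) : index -> R -> R := uncovered_net (fun c => code_eval c x).

Lemma net_eval_generators n (r : 'I_n -> R) (P : {mpoly R[n]}) : no_const P ->
  net_eval P (generator \o r) = uncovered_net (fun c => meval (fun i => code_eval c (r i)) P).
Proof.
move=> P0; apply: boolp.funext => a; apply: boolp.funext => t.
by rewrite /net_eval /uncovered_net /= indicE -meval_scale_bool.
Qed.

Lemma generator_inj : injective generator.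
Proof.
move=> x y gxy; apply: contrapT => xy.
pose r : 'I_2 -> R := fun i => if val i == 0%N then x else y.
have r_inj : injective r.
  move=> [[|[|i]] hi] [[|[|j]] hj] //=; rewrite /r /= => h;
    by [apply: val_inj | case: (xy h) | case: (xy (esym h))].
have P0 : ('X_ord0 - 'X_ord_max : {mpoly R[2]}) != 0.
  apply/eqP => /(congr1 (mcoeff U_(ord0))).
  by rewrite mcoeffB !mcoeffXU eqxx /= mcoeff0 subr0 => /eqP; rewrite oner_eq0.
have [c] := code_separates r_inj P0.
rewrite mevalB !mevalXU /r /= subr_eq0 => /eqP; apply.
by have := congr1 (fun f => f ([::], c) 0) gxy; rewrite /generator !uncovered_net_nil.
Qed.

Lemma index_card_covN :
  (forall G : set (set R), null_cover G -> injects_into F G) -> card_is_covN R index.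
Proof.
move=> Fmin; have [e e_inj] := nat_injects_members Fcover.
have [p p_inj] := square_injection e_inj.
have [enc enc_inj] := seq_injection e_inj.
have index_F : injects_into [set: index] F.
  exists (fun a => sval (p (enc a.1, e (pickle a.2)))); split=> [a _|]; first exact: svalP.
  move=> [s c] [s' c'] _ _ /member_inj /p_inj [/enc_inj -> /e_inj].
  by move=> /(pcan_inj pickleK) ->.
have F_index : injects_into F [set: index].
  exists (fun N => if pselect (F N) is left FN then ([:: exist _ N FN], code0) else ([::], code0)).
  by split=> // N N' FN FN'; case: pselect => // h; case: pselect => // h' [].
split=> [|G /Fmin FG]; last exact/injects_into_card_le/(injects_into_trans index_F).
by exists F; split=> //; apply: Cantor_Bernstein; apply: injects_into_card_le.
Qed.

Lemma generators_strongly_algebrable : @strongly_algebrable R index R (ND index_le).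
Proof.
exists (range generator); split=> [_ [x _ <-]|]; first exact: uncovered_net_elt.
split; first exact: inj_card_eq (in2W generator_inj).
split=> [n x P x_inj xg P0 P_nc|n x P x_inj xg P_nc Px0].
- have [r r_inj ->] := injective_range_factor x_inj xg.
  have [c Pc] := code_separates r_inj P0.
  rewrite net_eval_generators // => /(congr1 (fun f => f ([::], c) 0)).
  by rewrite uncovered_net_nil; apply/eqP.
- have [r r_inj xr] := injective_range_factor x_inj xg; rewrite xr net_eval_generators //.
  apply: (uncovered_net_ND (B := \sum_(m <- msupp P) `|P@_m|)).
    move=> c; apply: normr_meval_le => i.
    by rewrite ger0_norm ?code_eval_ge0 ?code_eval_le1.
  apply: contrapT => Q0; apply: Px0; rewrite xr net_eval_generators //.
  apply: boolp.funext => a; apply: boolp.funext => t; rewrite /uncovered_net.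
  have -> : meval (fun i => code_eval a.2 (r i)) P = 0.
    by apply: contrapT => Pa; apply: Q0; exists a.2; apply/eqP.
  by rewrite mulr0.
Qed.
End Net.

Theorem mainTheorem4 (R : realType) :
  exists (A : Type) (le : A -> A -> Prop),
    [/\ directed_set le,
        ~ is_cardinal_order le,
        card_is_covN R A &
        @strongly_algebrable R A R (@ND R A le)].
Proof.
have [F Fcover Fmin] := injects_into_minimum (singletons_null_cover R).
have [hull hullP] := choice (fun u : member F => (Fcover.1 _ (svalP u)).2).
exists (index F), (@index_le R F); split.
- exact: index_le_directed.
- exact: index_le_not_cardinal Fcover.
- exact: index_card_covN Fcover Fmin.
- exact: (generators_strongly_algebrable Fcover hullP).
Qed.
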